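(* Let $X_1,\dots,X_N$ be independent nonnegative random variables. (1) Suppose that for every $2\le j\le N$ there exists $\varphi_j\in\mathfrak{F}$ such that $\overline{F}_{X_j}(\varphi_j(x))=O(\overline{F}_{X_1}(x))$ and $\overline{F}_{X_1}(x/\varphi_j(x))=O(\overline{F}_{X_1}(x))$. Then $\overline{F}_{\prod_{i=1}^N X_i}(x)=O(\overline{F}_{X_1}(x))$. (2) Suppose that for every $2\le j\le N$ there exists $\varphi_j\in\mathfrak{F}$ such that $\overline{F}_{X_j}(\varphi_j(x))=O(\overline{F}_{X_1}(x))$ and $\overline{F}_{X_1}(x-\varphi_j(x))=O(\overline{F}_{X_1}(x))$. Then $\overline{F}_{\sum_{i=1}^N X_i}(x)=O(\overline{F}_{X_1}(x))$.
   Context: $\overline{F}_Y(x)=\Pr(Y>x)$; $f(x)=O(g(x))$ means $\limsup_{x\to\infty}f(x)/g(x)<\infty$. $\mathfrak{F}$ is the class of functions $\varphi:\mathbb{R}_{\ge0}\to\mathbb{R}_{\ge0}$ with $\lim_{x\to\infty}\varphi(x)=\infty$ and $\lim_{x\to\infty}\varphi(x)/x=0$. *)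

From HB Require Import structures.
From mathcomp Require Import all_boot all_order all_algebra.
From mathcomp Require Import all_classical all_reals all_analysis.
Set Implicit Arguments. Unset Strict Implicit. Unset Printing Implicit Defensive.
Import Order.TTheory GRing.Theory Num.Theory.
Import numFieldNormedType.Exports.
Local Open Scope classical_set_scope.
Local Open Scope ring_scope.

Definition tail {d} {T : measurableType d} {R : realType}
  (P : probability T R) (Y : T -> R) (x : R) : R :=
  fine (P [set w | x < Y w]).

Definition mutually_independent {d} {T : measurableType d} {R : realType}
  (P : probability T R) (n : nat) (X : 'I_n -> {RV P >-> R}) : Prop :=
  forall (J : {set 'I_n}) (B : 'I_n -> set R),
    (forall i, measurable (B i)) ->
    P (\bigcap_(i in [set` J]) (X i @^-1` B i)) =
    (\prod_(i in J) P (X i @^-1` B i))%E.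

(* The class \mathfrak F: phi : R_{>=0} -> R_{>=0} with phi(x) -> +oo and
   phi(x)/x -> 0 as x -> +oo.  phi is given as a function on R; only its
   values on [0,+oo) matter. *)
Definition frakF {R : realType} (phi : R -> R) : Prop :=
  (forall x, 0 <= x -> 0 <= phi x) /\
  phi x @[x --> +oo] --> +oo /\
  (phi x / x) @[x --> +oo] --> 0.

Definition bigO_pinfty {R : realType} (f g : R -> R) : Prop :=
  exists C : R, \forall x \near +oo, f x <= C * g x.

(* Let S_k be the product of X_1, ..., X_k and phi the function attached to
   X_k.  If S_k > x then X_k > phi(x) or S_(k-1) > x / phi(x), so by the
   union bound Pr(S_k > x) <= Pr(X_k > phi(x)) + Pr(S_(k-1) > x / phi(x)).
   The first term is O(F_1(x)) by hypothesis; by induction the second is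
   O(F_1(x / phi(x))), hence O(F_1(x)) because x / phi(x) -> +oo.  Sums are
   handled identically with x - phi(x) in place of x / phi(x). *)
From mathcomp Require Import all_boot all_order all_algebra.
From mathcomp Require Import all_classical all_reals all_analysis.
From mathcomp Require Import measurable_realfun lra.
Import Order.TTheory GRing.Theory Num.Theory.
Import numFieldNormedType.Exports.
Local Open Scope classical_set_scope.
Local Open Scope ring_scope.

Section bigO_pinfty.
Context {R : realType}.
Implicit Types f g k h : R -> R.

Lemma bigO_pinfty_refl f : bigO_pinfty f f.
Proof. by exists 1; near=> x; rewrite mul1r. Unshelve. all: end_near. Qed.

Lemma bigO_pinfty_le {f} f' {g} : (\forall x \near +oo, f x <= f' x) ->
  bigO_pinfty f' g -> bigO_pinfty f g.
Proof.
move=> ff' [C f'g]; exists C; near=> x.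
by rewrite (le_trans (near ff' x _)) ?(near f'g x _).
Unshelve. all: end_near. Qed.

Lemma bigO_pinfty_add {f1 f2 g} : bigO_pinfty f1 g -> bigO_pinfty f2 g ->
  bigO_pinfty (f1 \+ f2) g.
Proof.
move=> [C1 f1g] [C2 f2g]; exists (C1 + C2); near=> x.
by rewrite mulrDl lerD ?(near f1g x _) ?(near f2g x _).
Unshelve. all: end_near. Qed.

Lemma bigO_pinfty_trans {f g k} : (forall x, 0 <= g x) ->
  bigO_pinfty f g -> bigO_pinfty g k -> bigO_pinfty f k.
Proof.
move=> g0 [C fg] [D gk]; exists (`|C| * D); near=> x.
rewrite (le_trans (near fg x _)) // -mulrA.
rewrite (le_trans (ler_wpM2r (g0 x) (ler_norm C))) //.
by rewrite ler_wpM2l ?(near gk x _).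
Unshelve. all: end_near. Qed.

Lemma bigO_pinfty_comp {f g h} : h x @[x --> +oo] --> +oo ->
  bigO_pinfty f g -> bigO_pinfty (f \o h) (g \o h).
Proof. by move=> hy [C fg]; exists C; exact: hy fg. Qed.

End bigO_pinfty.

Section frakF.
Context {R : realType} {phi : R -> R}.
Hypothesis phiF : frakF phi.

Lemma frakF_gt0 : \forall x \near +oo, 0 < phi x.
Proof. by case: phiF => _ [/cvgryPgt phi_gt _]; exact: phi_gt. Qed.

Lemma frakF_div_cvgy : x / phi x @[x --> +oo] --> +oo.
Proof.
have -> : (fun x => x / phi x) = (fun x => (phi x / x)^-1).
  by apply/funext => x /=; rewrite invf_div.
have ratio_gt0 : \forall x \near +oo, 0 < phi x / x.
  near=> x; apply: divr_gt0; first exact: (near frakF_gt0 x _).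
  by near: x; exact: nbhs_pinfty_gt (num_real _).
by apply/(cvgrVy ratio_gt0); case: phiF => _ [].
Unshelve. all: end_near. Qed.

Lemma frakF_sub_cvgy : x - phi x @[x --> +oo] --> +oo.
Proof.
have [_ [_ /cvgr0Pnorm_lt small]] := phiF.
apply/cvgryPge => A; near=> x.
have x_gt0 : 0 < x by near: x; exact: nbhs_pinfty_gt (num_real _).
have x_ge2A : 2 * A <= x by near: x; exact: nbhs_pinfty_ge (num_real _).
have : phi x / x < 2^-1.
  by rewrite (le_lt_trans (ler_norm _)) //; near: x; apply: small.
rewrite ltr_pdivrMr // => phi_lt; lra.
Unshelve. all: end_near. Qed.

End frakF.

Section tail.
Context {d} {T : measurableType d} {R : realType} (P : probability T R).
Implicit Types Y Z W : T -> R.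

Lemma measurable_gt_preimage {Y} x : measurable_fun setT Y ->
  measurable [set w | x < Y w].
Proof.
move=> mY; rewrite -preimage_itvoy -[_ @^-1` _]setTI.
exact: mY measurableT _ (measurable_itv _).
Qed.

Lemma tail_ge0 Y x : 0 <= tail P Y x.
Proof. exact/fine_ge0/measure_ge0. Qed.

Lemma tail_le_union Y Z W x a b :
  measurable_fun setT Y -> measurable_fun setT Z -> measurable_fun setT W ->
  (forall w, x < W w -> a < Z w \/ b < Y w) ->
  tail P W x <= tail P Z a + tail P Y b.
Proof.
move=> mY mZ mW cover.
have mWx := measurable_gt_preimage x mW.
have mZa := measurable_gt_preimage a mZ.
have mYb := measurable_gt_preimage b mY.
rewrite /tail -fineD ?fin_num_measure //.
apply: fine_le; rewrite ?fin_numD ?fin_num_measure //.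
apply: le_trans (measureU2 P mZa mYb).
by apply: le_measure cover; rewrite inE //; exact: measurableU.
Qed.

Lemma bigO_tail_split {g : R -> R} {Y Z W} {phi h : R -> R} :
  (forall x, 0 <= g x) ->
  measurable_fun setT Y -> measurable_fun setT Z -> measurable_fun setT W ->
  h x @[x --> +oo] --> +oo ->
  (\forall x \near +oo, forall w, x < W w -> phi x < Z w \/ h x < Y w) ->
  bigO_pinfty (tail P Y) g ->
  bigO_pinfty (fun x => tail P Z (phi x)) g ->
  bigO_pinfty (fun x => g (h x)) g ->
  bigO_pinfty (tail P W) g.
Proof.
move=> g0 mY mZ mW hy cover OY OZ Ogh.
apply: (bigO_pinfty_le (fun x => tail P Z (phi x) + tail P Y (h x))).
  by near=> x; apply: tail_le_union => //; exact: (near cover x).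
apply: bigO_pinfty_add OZ _.
exact: bigO_pinfty_trans (fun x => g0 (h x)) (bigO_pinfty_comp hy OY) Ogh.
Unshelve. all: end_near. Qed.

End tail.

Section tail_big.
Context {d} {T : measurableType d} {R : realType} (P : probability T R).
Context {idx : R} (op : Monoid.law idx) (resid : R -> R -> R).
Hypothesis idx_ge0 : 0 <= idx.
Hypothesis op_ge0 : forall a b, 0 <= a -> 0 <= b -> 0 <= op a b.
Hypothesis measurable_fun_op : forall f g : T -> R,
  measurable_fun setT f -> measurable_fun setT g ->
  measurable_fun setT (fun w => op (f w) (g w)).
Hypothesis op_gt_split : forall x p a b, 0 < p -> 0 <= a -> 0 <= b ->
  x < op a b -> p < b \/ resid x p < a.
Hypothesis frakF_resid_cvgy : forall phi, frakF phi ->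
  resid x (phi x) @[x --> +oo] --> +oo.

Lemma measurable_fun_big {n} {X : 'I_n -> T -> R} :
  (forall i, measurable_fun setT (X i)) ->
  measurable_fun setT (fun w => \big[op/idx]_(i < n) X i w).
Proof.
elim: n X => [|n IH] X mX.
  by under eq_fun do rewrite big_ord0; exact: measurable_cst.
under eq_fun do rewrite big_ord_recr /=.
by apply: measurable_fun_op => //; exact: IH.
Qed.

Lemma bigO_tail_big n (X : 'I_n.+1 -> T -> R) (g : R -> R) :
  (forall i, measurable_fun setT (X i)) -> (forall i w, 0 <= X i w) ->
  (forall x, 0 <= g x) ->
  bigO_pinfty (tail P (X ord0)) g ->
  (forall j, j != ord0 -> exists phi, frakF phi /\
     bigO_pinfty (fun x => tail P (X j) (phi x)) g /\
     bigO_pinfty (fun x => g (resid x (phi x))) g) ->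
  bigO_pinfty (tail P (fun w => \big[op/idx]_(i < n.+1) X i w)) g.
Proof.
move=> + + g_ge0; elim: n X => [|n IH] X mX X_ge0 O0 HX.
  suff -> : (fun w => \big[op/idx]_(i < 1) X i w) = X ord0 by [].
  by apply/funext => w; rewrite big_ord1.
pose Xn i := X (widen_ord (leqnSn n.+1) i).
have mXn i : measurable_fun setT (Xn i) by exact: mX.
have [|phi [phiF [OZ Ogr]]] := HX ord_max; first by rewrite -(inj_eq val_inj).
apply: (bigO_tail_split P g_ge0 (measurable_fun_big mXn) (mX ord_max)
  (measurable_fun_big mX) (frakF_resid_cvgy _ phiF) _ _ OZ Ogr).
  near=> x => w; rewrite big_ord_recr /=; apply: op_gt_split => //.
    exact: (near (frakF_gt0 phiF) x _).
  by apply: (big_ind (fun y => 0 <= y)) => // i _; exact: X_ge0.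
apply: IH => // [i w||j j_neq0]; first exact: X_ge0.
- by rewrite /Xn (_ : widen_ord _ ord0 = ord0) //; exact: val_inj.
- by apply: HX; move: j_neq0; rewrite -!(inj_eq val_inj).
Unshelve. all: end_near. Qed.

End tail_big.

Lemma mulr_gt_split {R : realFieldType} (x p a b : R) :
  0 < p -> 0 <= a -> 0 <= b -> x < a * b -> p < b \/ x / p < a.
Proof.
move=> p_gt0 a_ge0 b_ge0 x_lt; have [|b_le] := ltP p b; [by left | right].
rewrite ltNge; apply: contraTN x_lt => a_le; rewrite -leNgt.
by rewrite -[x](divfK (lt0r_neq0 p_gt0)) ler_pM.
Qed.

Lemma addr_gt_split {R : realDomainType} (x p a b : R) :
  x < a + b -> p < b \/ x - p < a.
Proof. by move=> x_lt; have [|b_le] := ltP p b; [left | right; lra]. Qed.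

Theorem theorem11 (d : measure_display) (T : measurableType d) (R : realType)
  (P : probability T R) (N : nat) (X : 'I_N.+1 -> {RV P >-> R}) :
  mutually_independent X ->
  (forall i w, 0 <= X i w) ->
  ((forall j : 'I_N.+1, j != ord0 -> exists phi : R -> R, frakF phi /\
       bigO_pinfty (fun x => tail P (X j) (phi x)) (tail P (X ord0)) /\
       bigO_pinfty (fun x => tail P (X ord0) (x / phi x)) (tail P (X ord0))) ->
    bigO_pinfty (tail P (fun w => \prod_(i < N.+1) X i w)) (tail P (X ord0)))
  /\
  ((forall j : 'I_N.+1, j != ord0 -> exists phi : R -> R, frakF phi /\
       bigO_pinfty (fun x => tail P (X j) (phi x)) (tail P (X ord0)) /\
       bigO_pinfty (fun x => tail P (X ord0) (x - phi x)) (tail P (X ord0))) ->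
    bigO_pinfty (tail P (fun w => \sum_(i < N.+1) X i w)) (tail P (X ord0))).
Proof.
move=> _ X_ge0.
have mX i : measurable_fun setT (X i) by exact: measurable_funPT.
have O0 := bigO_pinfty_refl (tail P (X ord0)).
split=> HX.
- apply: (bigO_tail_big P ( *%R) (fun x p => x / p) ler01 (@mulr_ge0 _)
    (@measurable_funM _ _ _ setT) mulr_gt_split (@frakF_div_cvgy R)
    _ _ _ mX X_ge0 (tail_ge0 P _) O0 HX).
- apply: (bigO_tail_big P +%R (fun x p => x - p) (lexx 0) (@addr_ge0 _)
    (@measurable_funD _ _ _ setT) (fun x p a b _ _ _ => addr_gt_split x p a b)
    (@frakF_sub_cvgy R) _ _ _ mX X_ge0 (tail_ge0 P _) O0 HX).
Qed.
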